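(* The group of units $U(\Pi_2)$ of $\Pi_2=\langle a,b,c\mid (ab^ic)^2=1\ (i\geq 1)\rangle$ is isomorphic to the free product of countably infinitely many cyclic groups of order $2$, i.e. to the group $\langle x_i\ (i\geq 1)\mid x_i^2=1\ (i\geq1)\rangle$, via $ab^ic\mapsto x_i$. In particular, $U(\Pi_2)$ is not finitely generated.
   Context: The group of units $U(M)$ of a monoid $M$ is the set of elements having both a left and a right inverse. *)

From Stdlib Require Import Relations List.
From mathcomp Require Import all_boot.
Set Implicit Arguments. Unset Strict Implicit. Unset Printing Implicit Defensive.

(** A monoid presentation <A | l_j = r_j> is encoded by a relation
    [R : list A -> list A -> Prop] (R l r means "l = r" is a defining relation). *)
Definition pres_step (A : Type) (R : list A -> list A -> Prop) (u v : list A) : Prop :=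
  exists x y l r, R l r /\ u = x ++ l ++ y /\ v = x ++ r ++ y.

(** The congruence generated by R: the elements of the presented monoid are the
    classes of words for this equivalence; multiplication is concatenation. *)
Definition pres_eq (A : Type) (R : list A -> list A -> Prop) : relation (list A) :=
  clos_refl_sym_trans (list A) (pres_step R).

Definition pres_unit (A : Type) (R : list A -> list A -> Prop) (u : list A) : Prop :=
  (exists v, pres_eq R (v ++ u) [::]) /\ (exists v, pres_eq R (u ++ v) [::]).

(** u lies in the subgroup of U(M) generated by the (units represented by) S:
    u is equal in M to a product of elements each equal to an element of S or
    to an inverse of an element of S. *)
Definition pres_gen_by (A : Type) (R : list A -> list A -> Prop)
    (S : list (list A)) (u : list A) : Prop :=
  exists l : list (list A),
    (forall v, List.In v l -> exists s, List.In s S /\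
        (pres_eq R v s \/ (pres_eq R (v ++ s) [::] /\ pres_eq R (s ++ v) [::]))) /\
    pres_eq R (flatten l) u.

Inductive abc := La | Lb | Lc.

Definition abic (i : nat) : list abc := La :: nseq i Lb ++ [:: Lc].

Definition Pi2_rel (l r : list abc) : Prop :=
  exists i, 1 <= i /\ l = abic i ++ abic i /\ r = [::].

Definition Pi2_eq := pres_eq Pi2_rel.
Definition Pi2_unit := pres_unit Pi2_rel.

(** Letter [k : nat] stands
    for the generator x_(k+1).  As every generator is its own inverse, the
    monoid presentation below presents exactly this group. *)
Definition Z2free_rel (l r : list nat) : Prop :=
  exists k, l = [:: k; k] /\ r = [::].

Definition Z2free_eq := pres_eq Z2free_rel.

Definition phi (w : list nat) : list abc := flatten (map (fun k => abic k.+1) w).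

From Stdlib Require Import List Relations.
From mathcomp Require Import all_boot zify.
Set Implicit Arguments. Unset Strict Implicit. Unset Printing Implicit Defensive.

(** Words of Pi_2 are normalised by a stack machine [nf] that reads a word
    from the right and cancels a factor (a b^i c)^2 as soon as it appears at
    the top of the stack.  Pushing a relator onto a reduced stack changes
    nothing, so [nf] is constant on equality classes, and [nf w] is equal to
    w.  On the image of phi the machine performs free reduction of words in
    the x_i, which shows that phi is injective on the free product.

    Conversely, let r be a reduced unit.  Its right inverse forces r to begin
    with a (only a letter a can trigger a cancellation), and its left inverse
    forces r to be well formed (every a followed by b, every b by b or c),
    since only such stacks can be emptied by the machine.  Hence
    r = (a b^j c) r' with j >= 1 and r' a shorter reduced unit; by induction
    r lies in the image of phi.

    Finally, the parity of the number of occurrences of each generator is an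
    invariant of the free product, so x_(N+1) is not a product of
    x_1, ..., x_N, whereas finitely many units only involve finitely many
    generators. *)

Section Presentation.

Variables (A : Type) (R : list A -> list A -> Prop).

Lemma pres_eq_refl u : pres_eq R u u.
Proof. exact: rst_refl. Qed.

Lemma pres_eq_sym u v : pres_eq R u v -> pres_eq R v u.
Proof. exact: rst_sym. Qed.

Lemma pres_eq_trans u v w : pres_eq R u v -> pres_eq R v w -> pres_eq R u w.
Proof. exact: rst_trans. Qed.

Lemma pres_eq_rel x l r y : R l r -> pres_eq R (x ++ l ++ y) (x ++ r ++ y).
Proof. by move=> Rlr; apply: rst_step; exists x, y, l, r. Qed.

Lemma pres_eq_ctx x y u v : pres_eq R u v -> pres_eq R (x ++ u ++ y) (x ++ v ++ y).
Proof.
elim=> {u v} [u v [p [q [l [r [Rlr [-> ->]]]]]]|u|u v _|u v w _ IH1 _ IH2].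
- by have := pres_eq_rel (x ++ p) (q ++ y) Rlr; rewrite !catA.
- exact: pres_eq_refl.
- exact: pres_eq_sym.
- exact: pres_eq_trans IH2.
Qed.

Lemma pres_eq_cat u u' v v' :
  pres_eq R u u' -> pres_eq R v v' -> pres_eq R (u ++ v) (u' ++ v').
Proof.
move=> Eu Ev; apply: (@pres_eq_trans _ (u' ++ v)).
- by have := pres_eq_ctx [::] v Eu.
- by have := pres_eq_ctx u' [::] Ev; rewrite !cats0.
Qed.

Lemma pres_eq_invariant (B : Type) (f : list A -> B) :
  (forall u v, pres_step R u v -> f u = f v) ->
  forall u v, pres_eq R u v -> f u = f v.
Proof.
move=> fstep u v; elim=> {u v} [u v /fstep //|//|u v _ -> //|u v w _ -> _ -> //].
Qed.

Lemma pres_eq_morph (B : Type) (S : list B -> list B -> Prop) (h : list B -> list A) :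
  (forall x y, h (x ++ y) = h x ++ h y) ->
  (forall l r, S l r -> pres_eq R (h l) (h r)) ->
  forall u v, pres_eq S u v -> pres_eq R (h u) (h v).
Proof.
move=> hcat hrel u v; elim=> {u v} [u v [x [y [l [r [Slr [-> ->]]]]]]|u|u v _|u v w _ IH1 _ IH2].
- by rewrite !hcat; apply: pres_eq_ctx; apply: hrel.
- exact: pres_eq_refl.
- exact: pres_eq_sym.
- exact: pres_eq_trans IH2.
Qed.

Lemma left_inverse_unique u v v' :
  pres_eq R (v ++ u) [::] -> pres_eq R (u ++ v') [::] -> pres_eq R v v'.
Proof.
move=> Hl Hr; apply: (@pres_eq_trans _ (v ++ u ++ v')).
  by have := pres_eq_ctx v [::] (pres_eq_sym Hr); rewrite !cats0.
by rewrite catA; have := pres_eq_ctx [::] v' Hl.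
Qed.

Lemma unit_eq u u' : pres_eq R u u' -> pres_unit R u -> pres_unit R u'.
Proof.
move=> E [[v Hv] [v' Hv']]; split.
- by exists v; apply: pres_eq_trans Hv; apply: pres_eq_cat (pres_eq_refl _) (pres_eq_sym E).
- by exists v'; apply: pres_eq_trans Hv'; apply: pres_eq_cat (pres_eq_sym E) (pres_eq_refl _).
Qed.

Lemma unit_cat u v : pres_unit R u -> pres_unit R v -> pres_unit R (u ++ v).
Proof.
move=> [[u1 Hu1] [u2 Hu2]] [[v1 Hv1] [v2 Hv2]]; split.
- exists (v1 ++ u1); apply: pres_eq_trans Hv1.
  have -> : (v1 ++ u1) ++ u ++ v = v1 ++ (u1 ++ u) ++ v by rewrite !catA.
  by have := pres_eq_ctx v1 v Hu1.
- exists (v2 ++ u2); apply: pres_eq_trans Hu2.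
  have -> : (u ++ v) ++ v2 ++ u2 = u ++ (v ++ v2) ++ u2 by rewrite !catA.
  by have := pres_eq_ctx u u2 Hv2.
Qed.

End Presentation.

Arguments pres_eq_refl {A R} u.

Lemma cat_eq_cat (T : Type) (l1 l2 l3 l4 : list T) : l1 ++ l2 = l3 ++ l4 ->
  exists m, (l1 = l3 ++ m /\ l4 = m ++ l2) \/ (l3 = l1 ++ m /\ l2 = m ++ l4).
Proof.
elim: l1 l3 => [|x l1 IH] [|y l3] /=.
- by move=> ->; exists [::]; left.
- by move=> ->; exists (y :: l3); right.
- by move=> <-; exists (x :: l1); left.
- by case=> -> /IH [m [[-> ->]|[-> ->]]]; exists m; [left|right].
Qed.

Fixpoint splitb (t : list abc) : nat * list abc :=
  if t is Lb :: t' then ((splitb t').1.+1, (splitb t').2) else (0, t).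

Lemma splitb_spec t :
  t = nseq (splitb t).1 Lb ++ (splitb t).2 /\ ohead (splitb t).2 <> Some Lb.
Proof. by elim: t => [|[] t [E1 E2]] //=; rewrite -E1. Qed.

Lemma splitb_nseq i t : ohead t <> Some Lb -> splitb (nseq i Lb ++ t) = (i, t).
Proof.
move=> Ht; elim: i => [|i IH] /=; last by rewrite IH.
by case: t Ht => [|[] t].
Qed.

Definition parse_abic (w : list abc) : option (nat * list abc) :=
  if w is La :: t then
    (if (splitb t).2 is Lc :: t' then Some ((splitb t).1, t') else None)
  else None.

Lemma parse_abic_cat i t : parse_abic (abic i ++ t) = Some (i, t).
Proof. by rewrite /abic /= -catA splitb_nseq. Qed.

Lemma parse_abic_sound w i t : parse_abic w = Some (i, t) -> w = abic i ++ t.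
Proof.
case: w => [|[] w] //=; have [Ew _] := splitb_spec w.
case: (splitb w).2 Ew => [|[] t'] // Ew [<- <-].
by rewrite {1}Ew /abic /= -catA.
Qed.

Lemma abic_cat_inj i j t t' : abic i ++ t = abic j ++ t' -> i = j /\ t = t'.
Proof. by move=> E; have := parse_abic_cat i t; rewrite E parse_abic_cat => -[]. Qed.

Definition red (w : list abc) : option (list abc) :=
  if parse_abic w is Some (i, t) then
    (if parse_abic t is Some (j, t') then
       (if (0 < i) && (i == j) then Some t' else None)
     else None)
  else None.

Lemma red_abic_cat i j t :
  red (abic i ++ abic j ++ t) = if (0 < i) && (i == j) then Some t else None.
Proof. by rewrite /red !parse_abic_cat. Qed.

Lemma red_sound w t : red w = Some t -> exists2 i, 0 < i & w = abic i ++ abic i ++ t.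
Proof.
rewrite /red; case E1: (parse_abic w) => [[i t1]|] //.
case E2: (parse_abic t1) => [[j t2]|] //; case: ifP => // /andP [i_gt0 /eqP ij] [<-].
by exists i; rewrite // (parse_abic_sound E1) (parse_abic_sound E2) ij.
Qed.

Definition push (x : abc) (st : list abc) : list abc :=
  if red (x :: st) is Some t then t else x :: st.

Definition nf (w : list abc) : list abc := foldr push [::] w.

Lemma nf_cat u v : nf (u ++ v) = foldr push (nf v) u.
Proof. by rewrite /nf foldr_cat. Qed.

Definition reduced (st : list abc) : Prop :=
  forall p q i, 0 < i -> st <> p ++ abic i ++ abic i ++ q.

Lemma reduced_suffix p t : reduced (p ++ t) -> reduced t.
Proof. by move=> Hpt p' q i i_gt0 E; apply: (Hpt (p ++ p') q i i_gt0); rewrite E catA. Qed.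

(** Since a redex starts with a, only the top of the stack can create one. *)
Lemma push_reduced x st : reduced st -> reduced (push x st).
Proof.
rewrite /push; case E: (red _) => [t|] Hst.
- have [i _ [_ Est]] := red_sound E.
  by apply: (@reduced_suffix (behead (abic i) ++ abic i)); rewrite -catA -Est.
- move=> [|y p] q i i_gt0 /=.
  + by move=> Ex; rewrite Ex red_abic_cat i_gt0 eqxx in E.
  + by case=> _; apply: Hst.
Qed.

Lemma nf_reduced w : reduced (nf w).
Proof.
elim: w => [|x w IH] /=; last exact: push_reduced.
by move=> [|? ?] q i.
Qed.

(** Pushing a whole block acts on the block at once (b's and c's never
    trigger a cancellation). *)
Lemma push_abic i st :
  foldr push st (abic i) = if red (abic i ++ st) is Some t then t else abic i ++ st.
Proof.
have bc : foldr push st (nseq i Lb ++ [:: Lc]) = nseq i Lb ++ Lc :: st.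
  by rewrite foldr_cat; elim: i => [|i /= ->].
by rewrite /abic /= bc /push -catA.
Qed.

Lemma push_relator i st : 0 < i -> reduced st -> foldr push st (abic i ++ abic i) = st.
Proof.
move=> i_gt0 Hst; rewrite foldr_cat (push_abic i st).
case E: (red _) => [t|]; last by rewrite push_abic red_abic_cat i_gt0 eqxx.
have [j _ /abic_cat_inj [<- Est]] := red_sound E.
rewrite push_abic; case E': (red _) => [t'|] //.
have [k _ /abic_cat_inj [<- Et]] := red_sound E'.
by case: (Hst [::] t' i i_gt0); rewrite Est Et.
Qed.

Lemma nf_invariant u v : Pi2_eq u v -> nf u = nf v.
Proof.
apply: pres_eq_invariant => _ _ [x [y [l [r [[i [i_gt0 [-> ->]]] [-> ->]]]]]].
by rewrite !nf_cat push_relator //; apply: nf_reduced.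
Qed.

Lemma abic_square i t : 0 < i -> Pi2_eq (abic i ++ abic i ++ t) t.
Proof.
move=> i_gt0; have Hrel : Pi2_rel (abic i ++ abic i) [::] by exists i.
by have := pres_eq_rel [::] t Hrel; rewrite /= -catA.
Qed.

Lemma push_eq x st : Pi2_eq (x :: st) (push x st).
Proof.
rewrite /push; case E: (red _) => [t|]; last exact: pres_eq_refl.
by have [i i_gt0 ->] := red_sound E; apply: abic_square.
Qed.

Lemma nf_eq w : Pi2_eq w (nf w).
Proof.
elim: w => [|x w IH] /=; first exact: pres_eq_refl.
apply: pres_eq_trans (push_eq _ _).
by have := pres_eq_ctx [:: x] [::] IH; rewrite !cats0.
Qed.

Lemma nf_id r : reduced r -> nf r = r.
Proof.
elim: r => [|x r IH] Hr //=; rewrite IH; last exact: (@reduced_suffix [:: x]).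
rewrite /push; case E: (red _) => [t|] //.
by have [i i_gt0 Ex] := red_sound E; case: (Hr [::] t i i_gt0).
Qed.

(** Well-formed words: every a is followed by b and every b by b or c
    (in particular no word ending in a or b is well formed).  These are the
    stack contents a left-invertible reduced word can have. *)
Definition may_follow (x : abc) (y : option abc) : bool :=
  match x, y with
  | La, Some Lb | Lb, Some Lb | Lb, Some Lc | Lc, _ => true
  | _, _ => false
  end.

Fixpoint wellformed (w : list abc) : bool :=
  if w is x :: t then may_follow x (ohead t) && wellformed t else true.

Lemma wellformed_suffix p t : wellformed (p ++ t) -> wellformed t.
Proof. by elim: p => [|x p IH] //= /andP [_ /IH]. Qed.

Lemma wellformed_cat k t : wellformed k -> wellformed t -> wellformed (k ++ t).
Proof.
elim: k => [|x [|y k] IH] //= /andP [Hx Hk] Ht.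
- by rewrite Ht andbT; case: x Hx.
- by rewrite Hx; apply: IH.
Qed.

Lemma wellformed_abic i : 0 < i -> wellformed (abic i).
Proof. by case: i => // i _; rewrite /abic /=; elim: i. Qed.

Lemma wellformed_block t : wellformed (La :: t) ->
  exists j t', 0 < j /\ La :: t = abic j ++ t'.
Proof.
have bs s : wellformed (Lb :: s) -> exists j s', s = nseq j Lb ++ Lc :: s'.
  elim: s => [|[] s IH] // Hs; last by exists 0, s.
  by have [j [s' ->]] := IH (wellformed_suffix (p := [:: Lb]) Hs); exists j.+1, s'.
case: t => [|[] t] // /(wellformed_suffix (p := [:: La])) /bs [j [t' ->]].
by exists j.+1, t'; rewrite /abic /= -catA.
Qed.

(** Invariant: the stack is p ++ t where t is a suffix of q
    whose removed prefix k (q = k ++ t) is well formed, since it was eaten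
    inside cancelled squares of blocks. *)
Lemma wellformed_emptied q v : foldr push q v = [::] -> wellformed q.
Proof.
have inv : exists p k t, foldr push q v = p ++ t /\ q = k ++ t /\ wellformed k.
  elim: v => [|x v [p [k [t [Ev [Eq Hk]]]]]]; first by exists [::], [::], q.
  rewrite /= Ev /push; case E: (red _) => [t'|]; last by exists (x :: p), k, t.
  have [i i_gt0] := red_sound E; rewrite -cat_cons catA => /cat_eq_cat [m [[_ Et]|[Esq Et]]].
  - by exists m, k, t; rewrite Et.
  - exists [::], (k ++ m), t'; split=> //; split; first by rewrite -catA -Et.
    apply: wellformed_cat Hk (@wellformed_suffix (x :: p) _ _).
    by rewrite -Esq; apply: wellformed_cat; apply: wellformed_abic.
move=> Hv; have [p [k [t [Ev [-> Hk]]]]] := inv; rewrite Hv in Ev.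
by case: p t Ev => [|? ?] [|? ?] // _; rewrite cats0.
Qed.

(** A word with a right inverse starts with a: the last letter the machine
    pushes must be cancelled, and cancellations are triggered by a only. *)
Lemma right_invertible_head r v : Pi2_eq (r ++ v) [::] -> r <> [::] ->
  exists r', r = La :: r'.
Proof.
move/nf_invariant; rewrite nf_cat; case: r => [|x r] //= + _.
rewrite /push; case E: (red _) => [t|] // _.
by have [i _ [-> _]] := red_sound E; exists r.
Qed.

Lemma phi_cat x y : phi (x ++ y) = phi x ++ phi y.
Proof. by rewrite /phi map_cat flatten_cat. Qed.

Lemma phi_cons k w : phi (k :: w) = abic k.+1 ++ phi w.
Proof. by []. Qed.

Lemma phi_inj w w' : phi w = phi w' -> w = w'.
Proof.
elim: w w' => [|k w IH] [|k' w'] //.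
by rewrite !phi_cons => /abic_cat_inj [[->] /IH ->].
Qed.

Lemma abic_unit i : 0 < i -> Pi2_unit (abic i).
Proof. by move=> i_gt0; split; exists (abic i); have := abic_square [::] i_gt0; rewrite cats0. Qed.

(** Reduced units lie in the image of phi, by induction on their length:
    a right inverse makes r start with a, a left inverse makes r well formed,
    so r = a b^j c r' with j >= 1, and r' is again a reduced unit. *)
Lemma reduced_unit_phi r : reduced r -> Pi2_unit r -> exists w, r = phi w.
Proof.
have [n] := ubnP (size r); elim: n r => // n IH r size_r red_r u_r.
case: r => [|x r0] in size_r red_r u_r *; first by exists [::].
have [[v Hv] [v' Hv']] := u_r.
have [t Et] := right_invertible_head Hv' (@nil_cons _ x r0 \o esym).
rewrite {}Et in size_r red_r u_r Hv *.
have wf_r : wellformed (La :: t).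
  by apply: (@wellformed_emptied _ v); rewrite -(nf_id red_r) -nf_cat (nf_invariant Hv).
have [j [r' [j_gt0 Er]]] := wellformed_block wf_r; rewrite Er in size_r red_r u_r *.
have red_r' : reduced r' by apply: (@reduced_suffix (abic j)).
have u_r' : Pi2_unit r'.
  apply: (@unit_eq _ _ (abic j ++ abic j ++ r')); first exact: abic_square.
  by apply: unit_cat => //; apply: abic_unit.
have size_r' : size r' < n by move: size_r; rewrite size_cat /abic /= size_cat /=; lia.
have [w ->] := IH r' size_r' red_r' u_r'.
by exists (j.-1 :: w); rewrite phi_cons prednK.
Qed.

Lemma unit_in_image u : Pi2_unit u -> exists w, Pi2_eq u (phi w).
Proof.
move=> u_u; have [w Ew] := reduced_unit_phi (@nf_reduced u) (unit_eq (nf_eq u) u_u).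
by exists w; rewrite -Ew; apply: nf_eq.
Qed.

Definition fpush (k : nat) (st : list nat) : list nat :=
  if st is k' :: st' then (if k == k' then st' else k :: st) else [:: k].

Definition fred (w : list nat) : list nat := foldr fpush [::] w.

Lemma fred_eq w : Z2free_eq w (fred w).
Proof.
elim: w => [|k w IH] /=; first exact: pres_eq_refl.
apply: (@pres_eq_trans _ _ _ (k :: fred w)).
  by have := pres_eq_ctx [:: k] [::] IH; rewrite !cats0.
case: (fred w) => [|k' s] /=; first exact: pres_eq_refl.
case: eqP => [<-|_]; last exact: pres_eq_refl.
have Hrel : Z2free_rel [:: k; k] [::] by exists k.
exact: (pres_eq_rel [::] s Hrel).
Qed.

Lemma nf_phi w : nf (phi w) = phi (fred w).
Proof.
elim: w => [|k w IH] //; rewrite phi_cons nf_cat IH push_abic.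
rewrite -[fred (k :: w)]/(fpush k (fred w)); case: (fred w) => [|k' s].
- by rewrite /red parse_abic_cat.
- by rewrite phi_cons red_abic_cat eqSS /=; case: eqP.
Qed.

Lemma phi_morph w w' : Z2free_eq w w' -> Pi2_eq (phi w) (phi w').
Proof.
apply: pres_eq_morph => [x y|_ _ [k [-> ->]]]; first exact: phi_cat.
by have := abic_square [::] (ltn0Sn k); rewrite /phi /= !cats0.
Qed.

Lemma phi_faithful w w' : Z2free_eq w w' <-> Pi2_eq (phi w) (phi w').
Proof.
split=> [|/nf_invariant]; first exact: phi_morph.
rewrite !nf_phi => /phi_inj E.
by apply: pres_eq_trans (fred_eq w) _; rewrite E; apply: pres_eq_sym (fred_eq w').
Qed.

Lemma Z2free_rev w : Z2free_eq (rev w ++ w) [::] /\ Z2free_eq (w ++ rev w) [::].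
Proof.
elim: w => [|k w [IH1 IH2]]; first by split; apply: pres_eq_refl.
have Hrel : Z2free_rel [:: k; k] [::] by exists k.
rewrite rev_cons -cats1; split.
- apply: pres_eq_trans IH1.
  by have := pres_eq_rel (rev w) w Hrel; rewrite /= -catA.
- have -> : (k :: w) ++ rev w ++ [:: k] = [:: k] ++ (w ++ rev w) ++ [:: k] by rewrite catA.
  apply: pres_eq_trans (pres_eq_ctx [:: k] [:: k] IH2) _.
  exact: (pres_eq_rel [::] [::] Hrel).
Qed.

Lemma phi_unit w : Pi2_unit (phi w).
Proof.
have [H1 H2] := Z2free_rev w.
by split; exists (phi (rev w)); rewrite -phi_cat; [apply: (phi_morph H1) | apply: (phi_morph H2)].
Qed.

(** Words using only the generators x_1, ..., x_N, i.e. letters k < N. *)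
Definition bounded (N : nat) (w : list nat) : bool := all (fun k => k < N) w.

Lemma bounded_mono N M w : N <= M -> bounded N w -> bounded M w.
Proof. by move=> NM; apply: sub_all => k /leq_trans; apply. Qed.

Lemma bounded_exists w : exists N, bounded N w.
Proof.
elim: w => [|k w [N bN]]; first by exists 0.
exists (maxn N k.+1); rewrite /= leq_max ltnSn orbT.
by apply: bounded_mono bN; rewrite leq_maxl.
Qed.

Lemma parity_invariant N w w' :
  Z2free_eq w w' -> odd (count_mem N w) = odd (count_mem N w').
Proof.
apply: (pres_eq_invariant (f := fun w => odd (count_mem N w))).
move=> _ _ [x [y [_ [_ [[k [-> ->]] [-> ->]]]]]].
by rewrite !count_cat /= !oddD; case: (k == N).
Qed.

Lemma generator_not_bounded N W : bounded N W -> ~ Pi2_eq (phi [:: N]) (phi W).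
Proof.
move=> bW /phi_faithful /(parity_invariant N); rewrite /= eqxx.
have /count_memPn -> : N \notin W by apply/negP => /(allP bW); rewrite ltnn.
by [].
Qed.

Lemma units_bounded (S : list (list abc)) : (forall s, List.In s S -> Pi2_unit s) ->
  exists N, forall s, List.In s S -> exists2 w, Pi2_eq s (phi w) & bounded N w.
Proof.
elim: S => [|s S IH] uS; first by exists 0.
have [N HN] := IH (fun s' Ss' => uS s' (or_intror Ss')).
have [w Hw] := unit_in_image (uS s (or_introl erefl)).
have [M bM] := bounded_exists w.
exists (maxn N M) => s' [<-|/HN [w' Hw' bw']].
- by exists w => //; apply: bounded_mono bM; rewrite leq_maxr.
- by exists w' => //; apply: bounded_mono bw'; rewrite leq_maxl.
Qed.

Lemma gen_by_bounded N S u :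
  (forall s, List.In s S -> exists2 w, Pi2_eq s (phi w) & bounded N w) ->
  pres_gen_by Pi2_rel S u -> exists2 W, Pi2_eq u (phi W) & bounded N W.
Proof.
move=> HS [l [Hl Eu]].
suff [W EW bW] : exists2 W, Pi2_eq (flatten l) (phi W) & bounded N W.
  by exists W => //; apply: pres_eq_trans (pres_eq_sym Eu) EW.
elim: l Hl {Eu} => [|v l IH] Hl; first by exists [::]; [apply: pres_eq_refl|].
have [W EW bW] := IH (fun v' lv' => Hl v' (or_intror lv')).
suff [Wv EWv bWv] : exists2 Wv, Pi2_eq v (phi Wv) & bounded N Wv.
  by exists (Wv ++ W); [rewrite phi_cat; apply: pres_eq_cat | rewrite /bounded all_cat; apply/andP].
have [s [/HS [ws Es bws] [Evs|[Hvs _]]]] := Hl v (or_introl erefl).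
- by exists ws => //; apply: pres_eq_trans Es.
- exists (rev ws); last by rewrite /bounded all_rev.
  apply: (left_inverse_unique Hvs); apply: pres_eq_trans (phi_morph (proj2 (Z2free_rev ws))).
  by rewrite phi_cat; apply: pres_eq_cat Es (pres_eq_refl _).
Qed.

(** U(Pi_2) is not finitely generated: a finite set of units only reaches
    products of x_1, ..., x_N for some N, which misses x_(N+1). *)
Lemma units_not_finitely_generated :
  ~ (exists S : list (list abc),
        (forall s, List.In s S -> Pi2_unit s) /\
        (forall u, Pi2_unit u -> pres_gen_by Pi2_rel S u)).
Proof.
case=> S [uS genS]; have [N HN] := units_bounded uS.
have [W EW bW] := gen_by_bounded HN (genS _ (phi_unit [:: N])).
exact: generator_not_bounded bW EW.
Qed.

Theorem mainTheorem9 :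
  (* phi is well defined and injective on the group <x_i | x_i^2 = 1> *)
  (forall w w' : list nat, Z2free_eq w w' <-> Pi2_eq (phi w) (phi w')) /\
  (* its image consists of units of Pi_2 *)
  (forall w : list nat, Pi2_unit (phi w)) /\
  (* and every unit of Pi_2 lies in the image *)
  (forall u : list abc, Pi2_unit u -> exists w, Pi2_eq u (phi w)) /\
  (* in particular U(Pi_2) is not finitely generated *)
  ~ (exists S : list (list abc),
        (forall s, List.In s S -> Pi2_unit s) /\
        (forall u, Pi2_unit u -> pres_gen_by Pi2_rel S u)).
Proof.
split; first exact: phi_faithful.
split; first exact: phi_unit.
split; first exact: unit_in_image.
exact: units_not_finitely_generated.
Qed.
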